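(* Let $(X,m)$ be a configuration of particles with $X=\{x_1,\ldots,x_n\}\subset\mathbb{R}^N$ distinct points, nonzero masses $m_i$, total mass $\mu_0=\sum_i m_i\neq0$, and exponent $a\in\mathbb{R}\setminus\{0\}$. Then $(X,m)$ is a central configuration if and only if there exists $\lambda\in\mathbb{R}$ such that, with $S_{ij}=s_{ij}^a-\lambda/\mu_0$, each weighted system $(X,C_j)$, $j=1,\ldots,n$, defined by $C_j(x_i)=m_iS_{ij}$ for $i\neq j$ and $C_j(x_j)=-\sum_{i\neq j}m_iS_{ij}$, has identically zero first moment.
   Context: $s_{ij}=\overrightarrow{x_ix_j}^2$. The accelerations are $\overrightarrow{\gamma}_j=-\sum_{i\neq j}m_is_{ij}^a\overrightarrow{x_ix_j}$. $(X,m)$ is a central configuration if there exist a vector $\overrightarrow{\gamma}_O$, a point $x_O$ and a real number $\lambda$ with $\overrightarrow{\gamma}_j-\overrightarrow{\gamma}_O=\lambda\overrightarrow{x_Ox_j}$ for all $j$. The first moment of a weighted system $(X,w)$ is $\mu_1(p)=\sum_iw(x_i)\overrightarrow{px_i}$. *)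

From HB Require Import structures.
From mathcomp Require Import all_boot all_order all_algebra.
From mathcomp Require Import reals exp.
Set Implicit Arguments. Unset Strict Implicit. Unset Printing Implicit Defensive.
Import Order.TTheory GRing.Theory Num.Theory.
Local Open Scope ring_scope.

(* Points of R^N are row vectors 'rV[R]_N; the configuration is x : 'I_n -> 'rV_N,
   the vector x_i x_j is x j - x i. *)
Section Defs.
Variables (R : realType) (N n : nat).

Definition vecxy (p q : 'rV[R]_N) : 'rV[R]_N := q - p.

Definition sqn (v : 'rV[R]_N) : R := \sum_(k < N) v ord0 k ^+ 2.

Definition s_ (x : 'I_n -> 'rV[R]_N) (i j : 'I_n) : R := sqn (vecxy (x i) (x j)).

Definition accel (a : R) (x : 'I_n -> 'rV[R]_N) (m : 'I_n -> R) (j : 'I_n)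
  : 'rV[R]_N :=
  - \sum_(i < n | i != j) (m i * powR (s_ x i j) a) *: vecxy (x i) (x j).

Definition central_configuration (a : R) (x : 'I_n -> 'rV[R]_N) (m : 'I_n -> R)
  : Prop :=
  exists (gO xO : 'rV[R]_N) (lam : R),
    forall j, accel a x m j - gO = lam *: vecxy xO (x j).

Definition first_moment (x : 'I_n -> 'rV[R]_N) (w : 'I_n -> R) (p : 'rV[R]_N)
  : 'rV[R]_N := \sum_(i < n) w i *: vecxy p (x i).

Definition total_mass (m : 'I_n -> R) : R := \sum_(i < n) m i.

Definition S_ (a lam : R) (x : 'I_n -> 'rV[R]_N) (m : 'I_n -> R) (i j : 'I_n) : R :=
  powR (s_ x i j) a - lam / total_mass m.

Definition C_ (a lam : R) (x : 'I_n -> 'rV[R]_N) (m : 'I_n -> R) (j : 'I_n)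
  (i : 'I_n) : R :=
  if i != j then m i * S_ a lam x m i j
  else - \sum_(k < n | k != j) m k * S_ a lam x m k j.
End Defs.

From HB Require Import structures.
From mathcomp Require Import all_boot all_order all_algebra.
From mathcomp Require Import reals exp.
Import Order.TTheory GRing.Theory Num.Theory.
Local Open Scope ring_scope.

(* Write G for the centre of mass.  Since the weights C_j sum to zero, the
   first moment of (X, C_j) does not depend on the base point, and expanding
   S_ij shows that it equals gamma_j + lambda (x_j - G).  On the other hand,
   the internal forces cancel (sum_j m_j gamma_j = 0), so in a central
   configuration gamma_j - gamma_O = lambda (x_j - x_O) summed with the masses
   forces gamma_O = lambda (x_O - G), i.e. gamma_j = lambda (x_j - G).  Both
   conditions thus say that the accelerations are proportional to the
   positions relative to G, with opposite signs of lambda. *)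

Lemma sum_antisym_eq0 (R : numFieldType) (V : lmodType R) (I : finType)
    (f : I -> I -> V) :
  (forall i j, f j i = - f i j) -> \sum_i \sum_j f i j = 0.
Proof.
move=> fN; set T := \sum_i _.
have TN : T = - T.
  rewrite {1}/T exchange_big /= -sumrN.
  by apply: eq_bigr => i _; rewrite -sumrN; apply: eq_bigr => j _; apply: fN.
have : (2%:R : R) *: T == 0 by rewrite scaler_nat mulr2n {1}TN addNr.
by rewrite scaler_eq0 pnatr_eq0 => /eqP.
Qed.

Lemma sum_scale_pinned_weights (R : pzRingType) (V : lmodType R) (I : finType)
    (x : I -> V) (w : I -> R) (j : I) (p : V) :
  \sum_i (if i != j then w i else - \sum_(k | k != j) w k) *: (x i - p)
  = \sum_(i | i != j) w i *: (x i - x j).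
Proof.
rewrite (bigD1 j) //= eqxx /= scaleNr scaler_suml -sumrN addrC -big_split /=.
apply: eq_big => // i /negPf ->.
by rewrite -scalerBr opprB addrA subrK.
Qed.

Lemma sum_neq_scale_subr (R : pzRingType) (V : lmodType R) (I : finType)
    (x : I -> V) (w : I -> R) (j : I) :
  \sum_(i | i != j) w i *: (x i - x j) = \sum_i w i *: (x i - x j).
Proof. by rewrite [RHS](bigD1 j) //= subrr scaler0 add0r. Qed.

Section Configuration.
Variables (R : realType) (N n : nat) (x : 'I_n -> 'rV[R]_N) (m : 'I_n -> R).

Definition center_of_mass : 'rV[R]_N :=
  (total_mass m)^-1 *: \sum_i m i *: x i.

Lemma s_C i j : s_ x i j = s_ x j i.
Proof.
by apply: eq_bigr => k _; rewrite /vecxy -opprB !mxE sqrrN.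
Qed.

Lemma accelE (a : R) j :
  accel a x m j = \sum_i (m i * powR (s_ x i j) a) *: (x i - x j).
Proof.
rewrite /accel -sumrN -sum_neq_scale_subr.
by apply: eq_bigr => i _; rewrite /vecxy -scalerN opprB.
Qed.

Lemma sum_mass_accel (a : R) : \sum_j m j *: accel a x m j = 0.
Proof.
under eq_bigr => j _ do rewrite accelE scaler_sumr.
apply: sum_antisym_eq0 => i j.
by rewrite !scalerA s_C -scalerN opprB mulrCA mulrA.
Qed.

Hypothesis mass_neq0 : total_mass m != 0.

Lemma sum_mass_scale_subr (y : 'rV[R]_N) :
  \sum_i m i *: (x i - y) = total_mass m *: (center_of_mass - y).
Proof.
rewrite scalerBr scalerA divff // scale1r /total_mass scaler_suml -sumrB.
by apply: eq_bigr => i _; rewrite scalerBr.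
Qed.

Lemma first_moment_C (a lam : R) j p :
  first_moment x (C_ a lam x m j) p
  = accel a x m j + lam *: (x j - center_of_mass).
Proof.
rewrite /first_moment /vecxy sum_scale_pinned_weights.
under eq_bigr => i _ do rewrite /S_ mulrBr scalerBl.
rewrite sumrB accelE sum_neq_scale_subr; congr (_ + _).
under eq_bigr => i _ do rewrite mulrC -scalerA.
rewrite -scaler_sumr sum_neq_scale_subr sum_mass_scale_subr scalerA.
by rewrite divfK // -scalerN opprB.
Qed.

Lemma central_configurationE (a : R) :
  central_configuration a x m <->
  exists lam : R, forall j, accel a x m j = lam *: (x j - center_of_mass).
Proof.
split=> [[gO [xO [lam cc]]]|[lam cc]]; last first.
  by exists 0, center_of_mass, lam => j; rewrite subr0 cc.
exists lam => j.
have accel_cc k : accel a x m k = gO + lam *: (x k - xO).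
  by rewrite -(cc k) /vecxy addrC subrK.
have gO_eq : gO = lam *: (xO - center_of_mass).
  apply: (scalerI mass_neq0); apply/eqP; rewrite -subr_eq0; apply/eqP.
  rewrite -(sum_mass_accel a).
  under eq_bigr => k _ do rewrite accel_cc scalerDr scalerA mulrC -scalerA.
  rewrite big_split /= -scaler_suml -scaler_sumr sum_mass_scale_subr.
  by congr (_ + _); rewrite -scalerN -scalerN opprB !scalerA mulrC.
by rewrite accel_cc gO_eq -scalerDr addrC addrA subrK.
Qed.

End Configuration.

Theorem theorem5p2 (R : realType) (N n : nat) (x : 'I_n -> 'rV[R]_N)
  (m : 'I_n -> R) (a : R)
  (hx : injective x) (hm : forall i, m i != 0)
  (hmu : total_mass m != 0) (ha : a != 0) :
  central_configuration a x m <->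
  exists lam : R, forall (j : 'I_n) (p : 'rV[R]_N),
    first_moment x (C_ a lam x m j) p = 0.
Proof.
rewrite central_configurationE //.
split=> -[lam cc]; exists (- lam) => j.
  by move=> p; rewrite first_moment_C // cc scaleNr subrr.
apply/eqP; move: (cc j 0); rewrite first_moment_C // => /eqP.
by rewrite addr_eq0 scaleNr.
Qed.
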